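(* Let $G=(V,E)$ be a connected simple graph with $n$ vertices and let $\ell\ge 2$ be an integer. Then $$\sum_{uv\in E}\frac{1}{P(uv,\ell)+\ell}\ \ge\ \frac{n-1}{\ell},$$ where the sum runs over the edges of $G$, each counted once.
   Context: For vertices $u,v$ and an integer $\ell$, $P(uv,\ell)$ denotes the maximum number of internally vertex-disjoint paths in $G$ between $u$ and $v$ each having length (number of edges) between $2$ and $\ell$ inclusive. *)

From Stdlib Require Import ClassicalEpsilon.
From HB Require Import structures.
From mathcomp Require Import all_boot all_order all_algebra.
Set Implicit Arguments. Unset Strict Implicit. Unset Printing Implicit Defensive.

Definition simple_graph (T : finType) (e : rel T) : Prop :=
  symmetric e /\ irreflexive e.

Definition connected_graph (T : finType) (e : rel T) : Prop :=
  forall x y : T, connect e x y.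

(* A u-v path with internal vertex sequence s: u, s_1, ..., s_k, v,
   consecutive vertices adjacent, all vertices distinct.  Its length
   (number of edges) is size s + 1. *)
Definition uv_path (T : finType) (e : rel T) (u v : T) (s : seq T) : bool :=
  path e u (rcons s v) && uniq (u :: rcons s v).

Definition short_path (T : finType) (e : rel T) (l : nat) (u v : T) (s : seq T) : bool :=
  [&& uv_path e u v s, 2 <= (size s).+1 & (size s).+1 <= l].

Definition disjoint_short_family (T : finType) (e : rel T) (l : nat) (u v : T)
    (F : seq (seq T)) : Prop :=
  (forall s, s \in F -> short_path e l u v s) /\
  (forall i j, i < size F -> j < size F -> i != j ->
     forall x, x \in nth [::] F i -> x \notin nth [::] F j).

Definition asbool (P : Prop) : bool :=
  if excluded_middle_informative P then true else false.

(* Such a family has at most #|T| members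
   (internal vertex sets are nonempty and pairwise disjoint), so the
   maximum over k <= #|T| is the true maximum. *)
Definition Pnum (T : finType) (e : rel T) (u v : T) (l : nat) : nat :=
  \max_(k < #|T|.+1 | asbool (exists F, disjoint_short_family e l u v F /\ size F = k)) k.

From Stdlib Require Import ClassicalEpsilon.
From HB Require Import structures.
From mathcomp Require Import all_boot all_order all_algebra.
From mathcomp Require Import ring lra.
Import Order.TTheory GRing.Theory Num.Theory.
Set Implicit Arguments. Unset Strict Implicit. Unset Printing Implicit Defensive.
Local Open Scope ring_scope.

(* Electrical network argument.  Give every edge unit resistance.  By Foster's
   theorem the effective resistances R(uv) of the edges add up to n - 1, and by
   Thomson's principle R(uv) is at most the energy of any unit flow from u to v.
   Sending l/(P+l) along the edge uv itself and 1/(P+l) along each of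
   P = P(uv,l) internally disjoint u-v paths of length at most l is a unit flow;
   no edge is used twice, so its energy is at most
   (l/(P+l))^2 + P l (1/(P+l))^2 = l/(P+l).  Hence
   n - 1 <= sum_uv l/(P(uv,l)+l). *)

Lemma sum_mul_eq (R : pzSemiRingType) (I : finType) (P : pred I) (F : I -> R) (c : I) :
  \sum_(i | P i) F i * (i == c)%:R = (P c)%:R * F c.
Proof.
rewrite big_mkcond (bigD1 c) //= eqxx mulr1 big1 ?addr0.
  by case: (P c); rewrite ?mul1r ?mul0r.
by move=> i /negbTE ->; case: (P i); rewrite ?mulr0.
Qed.

Lemma sqr_sum (R : pzSemiRingType) (I : finType) (a : I -> R) :
  (\sum_i a i) ^+ 2 = \sum_i \sum_j a i * a j.
Proof. by rewrite expr2 mulr_suml; apply: eq_bigr => i _; rewrite mulr_sumr. Qed.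

Lemma sum_enum_val (R : nmodType) (T : finType) (F : T -> R) :
  \sum_x F x = \sum_(i < #|T|) F (enum_val i).
Proof. by rewrite big_enum_val. Qed.

Section Network.

Variables (T : finType) (e : rel T).

Definition oriented_edge (g : T * T) : bool :=
  e g.1 g.2 && (enum_rank g.1 < enum_rank g.2)%N.

Definition incid (x : T) (g : T * T) : rat := (x == g.1)%:R - (x == g.2)%:R.

(* [L + J], the Laplacian plus the all-ones matrix.  For a connected graph it
   is invertible and its inverse [green] agrees with the pseudoinverse of [L]
   on vectors of sum zero, so [transfer h h] is the effective resistance
   between the ends of [h]. *)
Definition lapJ (x y : T) : rat :=
  \sum_(g | oriented_edge g) incid x g * incid y g + 1.

Definition lapJ_mx : 'M[rat]_#|T| := \matrix_(i, j) lapJ (enum_val i) (enum_val j).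

Definition green (x y : T) : rat := invmx lapJ_mx (enum_rank x) (enum_rank y).

Definition potential (h : T * T) (x : T) : rat := \sum_y green x y * incid y h.

Definition transfer (g h : T * T) : rat :=
  \sum_x \sum_y incid x g * green x y * incid y h.

Definition is_unit_flow (h : T * T) (f : T * T -> rat) : Prop :=
  forall z, \sum_(g | oriented_edge g) incid z g * f g = incid z h.

Lemma sum_mul_incid (F : T -> rat) (g : T * T) :
  \sum_x F x * incid x g = F g.1 - F g.2.
Proof.
rewrite /incid; under eq_bigr do rewrite mulrBr.
by rewrite sumrB !sum_mul_eq !mul1r.
Qed.

Lemma sum_incid (g : T * T) : \sum_x incid x g = 0.
Proof.
rewrite -[RHS](subrr (1 : rat)) -(sum_mul_incid (fun=> 1) g).
by apply: eq_bigr => x _; rewrite mul1r.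
Qed.

Lemma oriented_edge_swap (a b : T) : symmetric e -> e a b -> a != b ->
  oriented_edge (b, a) = ~~ oriented_edge (a, b).
Proof.
move=> e_sym eab ab; rewrite /oriented_edge /= e_sym eab /=.
case: ltngtP => // /val_inj/enum_rank_inj eq_ab.
by rewrite eq_ab eqxx in ab.
Qed.

Lemma lapJC (x y : T) : lapJ x y = lapJ y x.
Proof. by rewrite /lapJ; congr (_ + _); apply: eq_bigr => g _; rewrite mulrC. Qed.

Lemma lapJ_row_sum (x : T) : \sum_y lapJ x y = #|T|%:R.
Proof.
rewrite /lapJ big_split /= sumr_const exchange_big /= big1 ?add0r // => g _.
by rewrite -mulr_sumr sum_incid mulr0.
Qed.

Lemma lapJ_col_sum (y : T) : \sum_x lapJ x y = #|T|%:R.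
Proof. by under eq_bigr do rewrite lapJC; exact: lapJ_row_sum. Qed.

Lemma lapJ_quadratic (w : T -> rat) :
  \sum_x \sum_y w x * lapJ x y * w y =
  \sum_(g | oriented_edge g) (\sum_x w x * incid x g) ^+ 2 + (\sum_x w x) ^+ 2.
Proof.
transitivity (\sum_x \sum_y \sum_(g | oriented_edge g) (w x * incid x g) * (w y * incid y g)
              + \sum_x \sum_y w x * w y).
  rewrite -big_split; apply: eq_bigr => x _; rewrite -big_split; apply: eq_bigr => y _.
  rewrite /lapJ mulrDr mulr1 mulrDl mulr_sumr mulr_suml; congr (_ + _).
  by apply: eq_bigr => g _; ring.
rewrite sqr_sum; congr (_ + _).
under eq_bigr do rewrite exchange_big /=.
by rewrite exchange_big; apply: eq_bigr => g _; rewrite sqr_sum.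
Qed.

Lemma lapJ_left_kernel (w : T -> rat) : symmetric e -> connected_graph e ->
  (forall y, \sum_x w x * lapJ x y = 0) -> forall x, w x = 0.
Proof.
move=> e_sym e_conn wL x.
have /eqP : \sum_(g | oriented_edge g) (\sum_x w x * incid x g) ^+ 2 + (\sum_x w x) ^+ 2 = 0.
  rewrite -lapJ_quadratic exchange_big big1 // => y _.
  by rewrite -mulr_suml wL mul0r.
have sq_ge0 g : oriented_edge g -> 0 <= (\sum_x w x * incid x g) ^+ 2.
  by move=> _; apply: sqr_ge0.
rewrite paddr_eq0 ?sqr_ge0 ?(sumr_ge0 _ sq_ge0) // => /andP [/eqP sq_edges0 sq_sum0].
have w_oriented g : oriented_edge g -> w g.1 = w g.2.
  move=> og; have /eqP := psumr_eq0P sq_ge0 sq_edges0 og.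
  by rewrite sqrf_eq0 sum_mul_incid subr_eq0 => /eqP.
have w_edge a b : e a b -> w a = w b.
  move=> eab; have [-> // | ab] := eqVneq a b.
  case oab: (oriented_edge (a, b)); first exact: w_oriented (a, b) oab.
  by rewrite (w_oriented (b, a)) // oriented_edge_swap // oab.
have w_const y : w y = w x.
  have /connectP [p ep ->] := e_conn y x.
  by elim: p y ep => //= z p IH y /andP [eyz ep]; rewrite (w_edge _ _ eyz) IH.
have nT : #|T| != 0%N by rewrite -lt0n; apply/card_gt0P; exists x.
move: sq_sum0; rewrite sqrf_eq0 (eq_bigr _ (fun y _ => w_const y)) sumr_const.
by rewrite -mulr_natl mulf_eq0 pnatr_eq0 (negbTE nT) => /eqP.
Qed.

Lemma lapJ_mx_unit : symmetric e -> connected_graph e -> lapJ_mx \in unitmx.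
Proof.
move=> e_sym e_conn; rewrite unitmxE unitfE; apply/negP => /det0P [w w0 wL].
move/negP: w0; apply; apply/eqP/rowP => i; rewrite mxE -[i]enum_valK.
apply: (lapJ_left_kernel (w := fun x => w 0 (enum_rank x))) => // y.
have := congr1 (fun A : 'rV_#|T| => A 0 (enum_rank y)) wL; rewrite !mxE => wLy.
rewrite -[RHS]wLy sum_enum_val; apply: eq_bigr => j _.
by rewrite enum_valK /lapJ_mx mxE enum_rankK.
Qed.

Section Resistance.

Hypothesis lapJ_unit : lapJ_mx \in unitmx.

Lemma lapJ_green (x z : T) : \sum_y lapJ x y * green y z = (x == z)%:R.
Proof.
have := congr1 (fun A : 'M_#|T| => A (enum_rank x) (enum_rank z)) (mulmxV lapJ_unit).
rewrite !mxE (inj_eq enum_rank_inj) => <-; rewrite [LHS]sum_enum_val.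
by apply: eq_bigr => j _; rewrite /green /lapJ_mx mxE enum_rankK enum_valK.
Qed.

Lemma green_lapJ (x z : T) : \sum_y green x y * lapJ y z = (x == z)%:R.
Proof.
have := congr1 (fun A : 'M_#|T| => A (enum_rank x) (enum_rank z)) (mulVmx lapJ_unit).
rewrite !mxE (inj_eq enum_rank_inj) => <-; rewrite [LHS]sum_enum_val.
by apply: eq_bigr => j _; rewrite /green /lapJ_mx mxE enum_rankK enum_valK.
Qed.

Lemma green_col_sum (z : T) : \sum_y green y z = #|T|%:R^-1.
Proof.
apply/esym/mulr1_eq.
transitivity (\sum_x \sum_y lapJ x y * green y z).
  rewrite exchange_big mulr_sumr; apply: eq_bigr => y _.
  by rewrite -mulr_suml lapJ_col_sum.
under eq_bigr do rewrite lapJ_green.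
by rewrite (bigD1 z) //= eqxx big1 ?addr0 // => x /negbTE ->.
Qed.

Lemma green_row_sum (x : T) : \sum_y green x y = #|T|%:R^-1.
Proof.
apply/esym/mulr1_eq.
transitivity (\sum_z \sum_y green x y * lapJ y z).
  rewrite exchange_big mulr_sumr; apply: eq_bigr => y _.
  by rewrite -mulr_sumr lapJ_row_sum mulrC.
under eq_bigr do rewrite green_lapJ.
by rewrite (bigD1 x) //= eqxx big1 ?addr0 // => z; rewrite eq_sym => /negbTE ->.
Qed.

Lemma sum_potential (h : T * T) : \sum_x potential h x = 0.
Proof.
rewrite /potential exchange_big /=; under eq_bigr do rewrite -mulr_suml green_col_sum.
by rewrite -mulr_sumr sum_incid mulr0.
Qed.

Lemma lapJ_potential (h : T * T) (z : T) :
  \sum_x lapJ z x * potential h x = incid z h.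
Proof.
rewrite /potential; under eq_bigr do rewrite mulr_sumr.
rewrite exchange_big /=.
transitivity (\sum_y incid y h * (y == z)%:R); last by rewrite sum_mul_eq mul1r.
apply: eq_bigr => y _; rewrite eq_sym -lapJ_green mulrC mulr_suml.
by apply: eq_bigr => x _; rewrite mulrA.
Qed.

Lemma transferE (g h : T * T) : transfer g h = \sum_x incid x g * potential h x.
Proof.
by apply: eq_bigr => x _; rewrite /potential mulr_sumr; apply: eq_bigr => y _; rewrite mulrA.
Qed.

Lemma transfer_unit_flow (h : T * T) : is_unit_flow h (transfer ^~ h).
Proof.
move=> z; under eq_bigr do rewrite transferE mulr_sumr.
rewrite exchange_big /=.
transitivity (\sum_x (lapJ z x - 1) * potential h x).
  apply: eq_bigr => x _; rewrite /lapJ addrK mulr_suml.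
  by apply: eq_bigr => g _; rewrite mulrA.
by under eq_bigr do rewrite mulrBl mul1r; rewrite sumrB lapJ_potential sum_potential subr0.
Qed.

Lemma sum_transfer_unit_flow (h k : T * T) (f : T * T -> rat) : is_unit_flow h f ->
  \sum_(g | oriented_edge g) transfer g k * f g = transfer h k.
Proof.
move=> f_flow; rewrite transferE; under eq_bigr do rewrite transferE mulr_suml.
rewrite exchange_big /=; apply: eq_bigr => x _.
by rewrite -f_flow mulr_suml; apply: eq_bigr => g _; rewrite mulrAC.
Qed.

(* Thomson's principle. *)
Lemma transfer_le_energy (h : T * T) (f : T * T -> rat) : is_unit_flow h f ->
  transfer h h <= \sum_(g | oriented_edge g) f g ^+ 2.
Proof.
move=> f_flow.
have cross := sum_transfer_unit_flow h f_flow.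
have self := sum_transfer_unit_flow h (transfer_unit_flow h).
have : 0 <= \sum_(g | oriented_edge g) (f g - transfer g h) ^+ 2.
  by apply: sumr_ge0 => g _; apply: sqr_ge0.
have -> : \sum_(g | oriented_edge g) (f g - transfer g h) ^+ 2 =
    \sum_(g | oriented_edge g) f g ^+ 2
    - 2 * \sum_(g | oriented_edge g) transfer g h * f g
    + \sum_(g | oriented_edge g) transfer g h * transfer g h.
  by rewrite mulr_sumr -sumrB -big_split /=; apply: eq_bigr => g _; ring.
by rewrite cross self; lra.
Qed.

(* Foster's theorem. *)
Lemma sum_transfer_diag : (0 < #|T|)%N ->
  \sum_(h | oriented_edge h) transfer h h = #|T|%:R - 1.
Proof.
move=> T_gt0.
transitivity (\sum_x \sum_y green x y * (lapJ y x - 1)).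
  rewrite /transfer exchange_big /=; apply: eq_bigr => x _.
  rewrite exchange_big /=; apply: eq_bigr => y _.
  by rewrite /lapJ addrK mulr_sumr; apply: eq_bigr => g _; ring.
have row x : \sum_y green x y * (lapJ y x - 1) = 1 - #|T|%:R^-1.
  by under eq_bigr do rewrite mulrBr mulr1; rewrite sumrB green_lapJ eqxx green_row_sum.
under eq_bigr do rewrite row.
rewrite sumrB sumr_const; congr (_ - _).
by rewrite sumr_const -[_ *+ _]mulr_natr mulVf // pnatr_eq0 -lt0n.
Qed.

End Resistance.
End Network.

Section UndirectedSteps.

Variable T : eqType.

Definition uedge_neq (st st' : T * T) : bool :=
  (st != st') && (st != (st'.2, st'.1)).

Lemma uedge_neq_sym : symmetric uedge_neq.
Proof.
move=> [a b] [c d]; rewrite /uedge_neq /= !xpair_eqE.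
by rewrite (eq_sym c a) (eq_sym d b) (eq_sym c b) (eq_sym d a) (andbC (b == c)).
Qed.

Lemma uedge_neq_of_endpoint (a : T) (st st' : T * T) :
  (a == st.1) || (a == st.2) -> a != st'.1 -> a != st'.2 -> uedge_neq st st'.
Proof.
case: st st' => p q [c d] /= a_st n1 n2; rewrite /uedge_neq !xpair_eqE.
by case/orP: a_st => /eqP E; subst a; apply/andP; split; apply/negP => /andP [/eqP E1 /eqP E2];
  subst; rewrite ?eqxx in n1 n2.
Qed.

Lemma mem_pairmap_pair (x : T) (t : seq T) (st : T * T) :
  st \in pairmap pair x t -> (st.1 \in belast x t) && (st.2 \in t).
Proof.
elim: t x => [|y t IH] x //=; rewrite in_cons => /orP [/eqP -> | /IH /andP [h1 h2]] /=.
  by rewrite eqxx mem_head.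
by rewrite h1 in_cons h2 !orbT.
Qed.

Lemma uedge_neq_pairmap (a : T) (st : T * T) (x : T) (t : seq T) (st' : T * T) :
  (a == st.1) || (a == st.2) -> a \notin x :: t -> st' \in pairmap pair x t ->
  uedge_neq st st'.
Proof.
move=> a_st a_xt /mem_pairmap_pair /andP [h1 h2]; apply: (uedge_neq_of_endpoint a_st).
  by apply: contraNneq a_xt => ->; apply: mem_belast.
by apply: contraNneq a_xt => ->; rewrite in_cons h2 orbT.
Qed.

Lemma pairmap_pair_uniq (x : T) (t : seq T) :
  uniq (x :: t) -> pairwise uedge_neq (pairmap pair x t).
Proof.
elim: t x => [|y t IH] x //= /andP [x_yt /IH ->]; rewrite andbT.
by apply/allP => st; apply: (uedge_neq_pairmap (a := x)) => //=; rewrite eqxx.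
Qed.

Lemma pairmap_pair_inner (x : T) (s : seq T) (y : T) (st : T * T) :
  s != [::] -> st \in pairmap pair x (rcons s y) ->
  exists2 a, a \in s & (a == st.1) || (a == st.2).
Proof.
case: s => [//|z s] _ /=; rewrite in_cons => /orP [/eqP -> | /mem_pairmap_pair /andP [h1 _]].
  by exists z; rewrite ?mem_head //= eqxx orbT.
by move: h1; rewrite belast_rcons => h1; exists st.1; rewrite ?eqxx.
Qed.

End UndirectedSteps.

Arguments uedge_neq {T} st st'.

Section EdgeFlows.

Variables (T : finType) (e : rel T).
Hypotheses (e_sym : symmetric e) (e_irr : irreflexive e).

Definition edge_flow (st g : T * T) : rat := (g == st)%:R - (g == (st.2, st.1))%:R.

Definition flow_sum (S : seq ((T * T) * rat)) (g : T * T) : rat :=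
  \sum_(p <- S) p.2 * edge_flow p.1 g.

Lemma edge_neq (a b : T) : e a b -> a != b.
Proof. by move=> eab; apply: contraTneq eab => ->; rewrite e_irr. Qed.

Lemma edge_flow_unit (a b : T) : e a b -> is_unit_flow e (a, b) (edge_flow (a, b)).
Proof.
move=> eab z; rewrite /edge_flow; under eq_bigr do rewrite mulrBr.
rewrite sumrB !sum_mul_eq /= (oriented_edge_swap e_sym eab (edge_neq eab)).
by case: (oriented_edge e (a, b)); rewrite /= ?mul1r ?mul0r ?subr0 // sub0r /incid opprB.
Qed.

Lemma edge_flow_energy (a b : T) : e a b ->
  \sum_(g | oriented_edge e g) edge_flow (a, b) g ^+ 2 = 1.
Proof.
move=> eab; have ba : (b, a) != (a, b).
  by rewrite xpair_eqE eq_sym (negbTE (edge_neq eab)).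
under eq_bigr do rewrite expr2 {2}/edge_flow mulrBr.
rewrite sumrB !sum_mul_eq /edge_flow /= !eqxx (negbTE ba) (eq_sym (a, b)) (negbTE ba).
rewrite (oriented_edge_swap e_sym eab (edge_neq eab)).
by case: (oriented_edge e (a, b)) => /=; ring.
Qed.

Lemma edge_flow_supp (st g : T * T) :
  edge_flow st g != 0 -> (g == st) || (g == (st.2, st.1)).
Proof. by rewrite /edge_flow; case: (g == st); case: (g == _); rewrite ?subrr ?eqxx. Qed.

Lemma edge_flow_orth (st st' g : T * T) : uedge_neq st st' ->
  edge_flow st g * edge_flow st' g = 0.
Proof.
case: st st' => a b [c d] /andP [n1 n2]; apply/eqP; rewrite mulf_eq0.
apply/negPn/negP => /norP [/edge_flow_supp h1 /edge_flow_supp h2].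
by move: h1 h2 => /= /orP [] /eqP -> /orP [] /eqP [E1 E2]; subst;
  rewrite ?eqxx in n1 n2.
Qed.

Lemma flow_sum_unit (S : seq ((T * T) * rat)) (z : T) :
  all (fun p => e p.1.1 p.1.2) S ->
  \sum_(g | oriented_edge e g) incid z g * flow_sum S g = \sum_(p <- S) p.2 * incid z p.1.
Proof.
elim: S => [_|[[a b] c] S IH] /=.
  by rewrite big_nil big1 // => g _; rewrite /flow_sum big_nil mulr0.
case/andP => eab eS; rewrite big_cons -IH //.
under eq_bigr do rewrite {1}/flow_sum big_cons mulrDr.
rewrite big_split /= -(edge_flow_unit eab z) mulr_sumr.
by congr (_ + _); apply: eq_bigr => g _; rewrite mulrCA.
Qed.

Lemma flow_sum_energy (S : seq ((T * T) * rat)) :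
  all (fun p => e p.1.1 p.1.2) S -> pairwise (fun p q => uedge_neq p.1 q.1) S ->
  \sum_(g | oriented_edge e g) flow_sum S g ^+ 2 = \sum_(p <- S) p.2 ^+ 2.
Proof.
elim: S => [_ _|[[a b] c] S IH] /=.
  by rewrite big_nil big1 // => g _; rewrite /flow_sum big_nil expr0n.
case/andP => eab eS /andP [ab_S S_pw]; rewrite big_cons -IH //.
have orth g : edge_flow (a, b) g * flow_sum S g = 0.
  rewrite /flow_sum mulr_sumr big_seq big1 // => q qS.
  by rewrite mulrCA edge_flow_orth ?mulr0 // (allP ab_S q qS).
have sq g : flow_sum ((a, b, c) :: S) g ^+ 2 =
    c ^+ 2 * edge_flow (a, b) g ^+ 2 + flow_sum S g ^+ 2.
  rewrite {1}/flow_sum big_cons -/(flow_sum S g) sqrrD exprMn /=.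
  by rewrite -[_ * _ * flow_sum S g]mulrA orth mulr0 mul0rn addr0.
under eq_bigr do rewrite sq.
by rewrite big_split /= -mulr_sumr edge_flow_energy // mulr1.
Qed.

Lemma sum_incid_pairmap (z x : T) (t : seq T) :
  \sum_(st <- pairmap pair x t) incid z st = incid z (x, last x t).
Proof.
elim: t x => [|y t IH] x /=; first by rewrite big_nil /incid subrr.
by rewrite big_cons IH /incid /=; ring.
Qed.

Lemma pairmap_pair_edges (x : T) (t : seq T) :
  path e x t -> all (fun st => e st.1 st.2) (pairmap pair x t).
Proof. by elim: t x => [|y t IH] x //= /andP [-> /IH ->]. Qed.

End EdgeFlows.

Section ShortPathFamilies.

Variables (T : finType) (e : rel T) (l : nat) (u v : T).

Definition family_steps (F : seq (seq T)) : seq (T * T) :=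
  flatten [seq pairmap pair u (rcons s v) | s <- F].

Lemma disjoint_short_family_cons (s : seq T) (F : seq (seq T)) :
  disjoint_short_family e l u v (s :: F) ->
  [/\ short_path e l u v s,
      forall s', s' \in F -> forall x, x \in s -> x \notin s'
    & disjoint_short_family e l u v F].
Proof.
move=> [F_short F_disj]; split.
- by apply: F_short; rewrite mem_head.
- move=> s' s'F x xs.
  have := F_disj 0%N (index s' F).+1 isT; rewrite /= ltnS index_mem nth_index //.
  exact.
- split; first by move=> s' s'F; apply: F_short; rewrite in_cons s'F orbT.
  by move=> i j hi hj hij x; apply: (F_disj i.+1 j.+1).
Qed.

Lemma short_path_step_inner (s : seq T) (st : T * T) :
  short_path e l u v s -> st \in pairmap pair u (rcons s v) ->
  exists2 a, [/\ a \in s, a != u & a != v] & (a == st.1) || (a == st.2).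
Proof.
case/and3P => /andP [_ uniq_s] s_gt0 _ st_in.
have s0 : s != [::] by case: s s_gt0 {uniq_s st_in}.
have [a a_s a_st] := pairmap_pair_inner s0 st_in.
move: uniq_s; rewrite /= mem_rcons in_cons negb_or rcons_uniq.
case/andP => /andP [_ u_s] /andP [v_s _].
by exists a => //; split => //; [apply: contraNneq u_s | apply: contraNneq v_s] => <-.
Qed.

Lemma sum_incid_family_steps (z : T) (F : seq (seq T)) :
  \sum_(st <- family_steps F) incid z st = (size F)%:R * incid z (u, v).
Proof.
elim: F => [|s F IH]; first by rewrite big_nil mul0r.
by rewrite /family_steps /= big_cat IH sum_incid_pairmap last_rcons mulrS mulrDl mul1r.
Qed.

Lemma size_family_steps (F : seq (seq T)) : disjoint_short_family e l u v F ->
  (size (family_steps F) <= size F * l)%N.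
Proof.
elim: F => [//|s F IH] /disjoint_short_family_cons [s_short _ F_dsf].
rewrite /family_steps /= size_cat size_pairmap size_rcons mulSn leq_add ?IH //.
by case/and3P: s_short.
Qed.

Lemma family_steps_edges (F : seq (seq T)) : disjoint_short_family e l u v F ->
  all (fun st => e st.1 st.2) (family_steps F).
Proof.
elim: F => [//|s F IH] /disjoint_short_family_cons [s_short _ F_dsf].
rewrite /family_steps /= all_cat (IH F_dsf) andbT.
by case/and3P: s_short => /andP [/pairmap_pair_edges].
Qed.

Lemma family_steps_avoid (F : seq (seq T)) : disjoint_short_family e l u v F ->
  all (uedge_neq (u, v)) (family_steps F).
Proof.
case=> F_short _; apply/allP => st /flatten_mapP [s sF st_in].
have [a [_ au av] a_st] := short_path_step_inner (F_short s sF) st_in.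
rewrite uedge_neq_sym; apply: (uedge_neq_pairmap (x := u) (t := [:: v]) a_st).
  by rewrite !inE negb_or au av.
by rewrite /= mem_head.
Qed.

Lemma family_steps_pairwise (F : seq (seq T)) : disjoint_short_family e l u v F ->
  pairwise uedge_neq (family_steps F).
Proof.
elim: F => [//|s F IH] /disjoint_short_family_cons [s_short s_disj F_dsf].
rewrite /family_steps /= pairwise_cat (IH F_dsf) andbT; apply/andP; split.
  apply/allrelP => st st' st_in /flatten_mapP [s' s'F st'_in].
  have [a [a_s au av] a_st] := short_path_step_inner s_short st_in.
  apply: (uedge_neq_pairmap a_st _ st'_in).
  rewrite in_cons mem_rcons in_cons (negbTE au) (negbTE av).
  exact: s_disj s' s'F a a_s.
by case/and3P: s_short => /andP [_ /pairmap_pair_uniq].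
Qed.

End ShortPathFamilies.

Lemma Pnum_attained (T : finType) (e : rel T) (u v : T) (l : nat) :
  exists2 F, disjoint_short_family e l u v F & size F = Pnum e u v l.
Proof.
rewrite /Pnum.
set P := fun k : 'I_#|T|.+1 =>
  asbool (exists F, disjoint_short_family e l u v F /\ size F = k).
have P0 : P ord0.
  rewrite /P /asbool; case: excluded_middle_informative => // -[].
  by exists [::]; split => //; split=> // s; rewrite in_nil.
rewrite (@bigop.bigmax_eq_arg _ ord0 _ _ P0); case: arg_maxnP => // i Pi _.
move: Pi; rewrite /P /asbool.
by case: excluded_middle_informative => [[F [F_dsf F_size]] _|//]; exists F.
Qed.

Lemma transfer_edge_le (T : finType) (e : rel T) (l : nat) (u v : T) :
  simple_graph e -> lapJ_mx e \in unitmx -> e u v -> (0 < l)%N ->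
  transfer e (u, v) (u, v) <= l%:R / ((Pnum e u v l)%:R + l%:R).
Proof.
move=> [e_sym e_irr] L_unit euv l_gt0.
have [F F_dsf <-] := Pnum_attained e u v l.
pose D : rat := (size F)%:R + l%:R.
have D_gt0 : 0 < D by rewrite /D -natrD ltr0n addn_gt0 l_gt0 orbT.
pose steps := family_steps u v F.
pose S := ((u, v), l%:R / D) :: [seq (st, D^-1) | st <- steps].
have S_edges : all (fun p => e p.1.1 p.1.2) S.
  by rewrite /= euv all_map; exact: family_steps_edges F_dsf.
have S_pairwise : pairwise (fun p q => uedge_neq p.1 q.1) S.
  rewrite /= pairwise_map all_map; apply/andP; split.
    exact: family_steps_avoid F_dsf.
  exact: family_steps_pairwise F_dsf.
have S_flow : is_unit_flow e (u, v) (flow_sum S).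
  move=> z; rewrite flow_sum_unit // big_cons big_map /= -mulr_sumr.
  rewrite sum_incid_family_steps.
  have D_split : l%:R / D + (size F)%:R / D = 1.
    by rewrite -mulrDl addrC divff // lt0r_neq0.
  transitivity ((l%:R / D + (size F)%:R / D) * incid z (u, v)); first by ring.
  by rewrite D_split mul1r.
apply: le_trans (transfer_le_energy L_unit S_flow) _.
rewrite flow_sum_energy // big_cons big_map /= big_const_seq count_predT iter_addr_0.
have energy_eq : (l%:R / D) ^+ 2 + D^-1 ^+ 2 * (size F * l)%:R = l%:R / D.
  by rewrite natrM /D; field; rewrite lt0r_neq0.
rewrite -[X in _ <= X]energy_eq lerD2l -[_ *+ size steps]mulr_natr.
by rewrite ler_pM2l ?exprn_gt0 ?invr_gt0 // ler_nat (size_family_steps F_dsf).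
Qed.

Theorem mainTheorem7 (T : finType) (e : rel T) (l : nat) :
  simple_graph e -> connected_graph e -> (2 <= l)%N ->
  \sum_(u : T) \sum_(v : T | e u v && (enum_rank u < enum_rank v)%N)
      (1 / ((Pnum e u v l)%:R + l%:R) : rat)
  >= (#|T|%:R - 1) / l%:R.
Proof.
move=> e_simple e_conn l_ge2.
have l_gt0 : (0 < l)%N by apply: leq_trans l_ge2.
have [T_empty | T_gt0] := posnP #|T|.
  apply: (@le_trans _ _ 0).
    by rewrite T_empty sub0r mulNr oppr_le0 divr_ge0.
  by do 2!(apply: sumr_ge0 => ? _); rewrite divr_ge0 ?addr_ge0.
have L_unit := lapJ_mx_unit e_simple.1 e_conn.
rewrite pair_big_dep /= (eq_bigl (oriented_edge e)) //.
rewrite ler_pdivrMr ?ltr0n // -(sum_transfer_diag L_unit T_gt0) mulr_suml.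
apply: ler_sum => -[u v] /andP [euv _] /=.
by rewrite mul1r mulrC; apply: transfer_edge_le.
Qed.
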